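(* Let the $\mathbb{C}^*$-action on $\mathbb{P}^n$ be given by $\lambda\cdot[z_0:\dots:z_n]=[\lambda^{a_0}z_0:\dots:\lambda^{a_n}z_n]$ with integers $a_0\leq a_1\leq\dots\leq a_n$, not all equal. Let $X\subset\mathbb{P}^n$ be a smooth connected projective variety invariant under this action (with the induced action), and suppose $X^{\mathbb{C}^*}$ is finite. Let $F_1,\dots,F_r$ be the connected components of $(\mathbb{P}^n)^{\mathbb{C}^*}$, where $F_1$ is the component linearly spanned by the coordinate points $p_0,\dots,p_k$ (so $a_0=\dots=a_k<a_{k+1}$ and $\dim F_1=k$). Then $\#(X\cap F_1)\leq \dim F_1+1$.
   Context: $p_i\in\mathbb{P}^n$ denotes the coordinate point with $1$ in position $i$ and $0$ elsewhere. $(\mathbb{P}^n)^{\mathbb{C}^*}$ and $X^{\mathbb{C}^*}$ denote the sets of points fixed by every $\lambda\in\mathbb{C}^*$; the connected components of $(\mathbb{P}^n)^{\mathbb{C}^*}$ are the linear subspaces spanned by coordinate points with equal weight $a_i$. *)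

From HB Require Import structures.
From mathcomp Require Import all_boot all_order all_algebra.
From mathcomp Require mpoly.
From mathcomp Require Import reals complex.

Set Implicit Arguments.
Unset Strict Implicit.
Unset Printing Implicit Defensive.

Import Order.TTheory GRing.Theory Num.Theory.
Local Open Scope ring_scope.

(* The complex numbers: C = R[i] for R a realType (any complete archimedean
   ordered field, i.e. the reals up to isomorphism). *)
Definition CC (R : realType) : fieldType := complex R.

Section ProjGeom.
Variable K : fieldType.
Variable n : nat.   (* ambient projective space P^n, homogeneous coords 'I_n.+1 *)

Definition hpoint := 'I_n.+1 -> K.
Definition hpoly := mpoly.mpoly n.+1 K.

Definition nonzero (v : hpoint) : Prop := exists i, v i != 0.

Definition proportional (v w : hpoint) : Prop :=
  exists c : K, c != 0 /\ forall i, w i = c * v i.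

Definition ev (f : hpoly) (v : hpoint) : K := mpoly.meval v f.

Definition is_homog (f : hpoly) : Prop :=
  exists d : nat, forall m : mpoly.multinom n.+1, mpoly.mcoeff m f != 0 -> mpoly.mdeg m = d.

(* A subset of P^n, given as a predicate on homogeneous coordinate vectors. *)
Definition pset := hpoint -> Prop.

Definition psubset (Y Z : pset) : Prop := forall v, Y v -> Z v.

Definition zclosed (X : pset) : Prop :=
  exists S : hpoly -> Prop, (forall f, S f -> is_homog f) /\
    forall v, X v <-> (nonzero v /\ forall f, S f -> ev f v = 0).

Definition irreducible (X : pset) : Prop :=
  (exists v, X v) /\
  forall Y Z : pset, zclosed Y -> zclosed Z ->
    psubset X (fun v => Y v \/ Z v) -> psubset X Y \/ psubset X Z.

Definition proj_variety (X : pset) : Prop := zclosed X /\ irreducible X.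

Definition connected (X : pset) : Prop :=
  (exists v, X v) /\
  forall Y Z : pset, zclosed Y -> zclosed Z ->
    psubset X (fun v => Y v \/ Z v) ->
    (forall v, X v -> Y v -> Z v -> False) ->
    psubset X Y \/ psubset X Z.

Definition pssubset (Y Z : pset) : Prop :=
  psubset Y Z /\ exists v, Z v /\ ~ Y v.

Definition dim_ge (X : pset) (m : nat) : Prop :=
  exists Z : nat -> pset,
    (forall i, (i <= m)%N -> zclosed (Z i) /\ irreducible (Z i) /\ psubset (Z i) X) /\
    (forall i, (i < m)%N -> pssubset (Z i) (Z i.+1)).

Definition has_dim (X : pset) (d : nat) : Prop := dim_ge X d /\ ~ dim_ge X d.+1.

Definition vanishes_on (X : pset) (f : hpoly) : Prop := forall v, X v -> ev f v = 0.

Definition jacobian (r : nat) (fs : 'I_r -> hpoly) (p : hpoint) : 'M[K]_(r, n.+1) :=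
  \matrix_(j < r, i < n.+1) ev (mpoly.mderiv i (fs j)) p.

Definition jac_rank_ge (X : pset) (p : hpoint) (r : nat) : Prop :=
  exists fs : 'I_r -> hpoly, (forall j, vanishes_on X (fs j)) /\ row_free (jacobian fs p).

Definition jac_rank (X : pset) (p : hpoint) (r : nat) : Prop :=
  jac_rank_ge X p r /\ ~ jac_rank_ge X p r.+1.

(* Jacobian criterion: X of dimension d is smooth iff at every point the
   Jacobian of I(X) has rank n - d (codimension in P^n). *)
Definition smooth (X : pset) : Prop :=
  exists d, has_dim X d /\ forall p, X p -> jac_rank X p (n - d).

End ProjGeom.

Definition cstar_act (K : fieldType) (n : nat) (a : 'I_n.+1 -> int) (l : K)
  (v : hpoint K n) : hpoint K n := fun i => l ^ (a i) * v i.

Definition cstar_invariant (K : fieldType) (n : nat) (a : 'I_n.+1 -> int)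
  (X : pset K n) : Prop :=
  forall l : K, l != 0 -> forall v, X v -> X (cstar_act a l v).

Definition cstar_fixed (K : fieldType) (n : nat) (a : 'I_n.+1 -> int)
  (v : hpoint K n) : Prop :=
  forall l : K, l != 0 -> proportional v (cstar_act a l v).

Definition finite_fixed_locus (K : fieldType) (n : nat) (a : 'I_n.+1 -> int)
  (X : pset K n) : Prop :=
  exists (m : nat) (w : 'I_m -> hpoint K n),
    forall v, X v -> cstar_fixed a v -> exists j, proportional (w j) v.

(* the linear span of p_0, ..., p_k (among nonzero vectors) *)
Definition span_first (K : fieldType) (n k : nat) : pset K n :=
  fun v => nonzero v /\ forall i : 'I_n.+1, (k < i)%N -> v i = 0.

From HB Require Import structures.
From mathcomp Require Import all_boot all_order all_algebra.
From mathcomp Require Import reals complex.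
From mathcomp Require Import mpoly.
From Stdlib Require Import Classical.
Import Order.TTheory GRing.Theory Num.Theory.
Local Open Scope ring_scope.

Set Implicit Arguments.
Unset Strict Implicit.

(* For x in X the limit of lambda.x as lambda -> 0 keeps exactly the
   coordinates x_0, ..., x_k of minimal weight; when they do not all vanish
   it is a fixed point of X lying in F_1.  As X^{C^*} is finite, X is
   covered by finitely many closed sets: the points whose block
   (x_0 : ... : x_k) is that of a given fixed point, and the points with
   x_0 = ... = x_k = 0.  By irreducibility X lies in one of them, so any two
   points of X on F_1 coincide: X meets F_1 in at most one point, the source
   of the action. *)

Section ClosedSets.
Variables (K : fieldType) (n : nat).

Lemma is_homogP (f : hpoly K n) : is_homog f <-> exists d, f \is d.-homog.
Proof.
split=> [[d hd]|[d /dhomogP hd]]; exists d.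
  by apply/dhomogP => m; rewrite mcoeff_msupp => /hd.
by move=> m mz; apply: hd; rewrite mcoeff_msupp.
Qed.

Lemma zclosed_nonzero (X : pset K n) v : zclosed X -> X v -> nonzero v.
Proof. by move=> [S [_ eS]] /eS []. Qed.

Lemma zclosed_ext (Y Z : pset K n) :
  (forall v, Y v <-> Z v) -> zclosed Y -> zclosed Z.
Proof. by move=> YZ [S [hS eS]]; exists S; split=> // v; split=> [/YZ/eS|/eS/YZ]. Qed.

Lemma zclosed_empty : zclosed (fun _ : hpoint K n => False).
Proof.
exists (fun f => f = 1); split.
  by move=> f ->; apply/is_homogP; exists 0%N; exact: dhomog1.
move=> v; split=> // [[_ /(_ 1 erefl)]].
by rewrite /ev meval1 => /eqP; rewrite oner_eq0.
Qed.

(* The products of an equation of Y with an equation of Z cut out Y \/ Z. *)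
Lemma zclosed_union (Y Z : pset K n) :
  zclosed Y -> zclosed Z -> zclosed (fun v => Y v \/ Z v).
Proof.
move=> [S [hS eS]] [T [hT eT]].
exists (fun h => exists f g, [/\ S f, T g & h = f * g]); split.
  move=> _ [f [g [Sf Tg ->]]].
  have /is_homogP [d1 h1] := hS f Sf; have /is_homogP [d2 h2] := hT g Tg.
  by apply/is_homogP; exists (d1 + d2)%N; exact: dhomogM.
move=> v; rewrite eS eT; split.
  case=> [[nz Sv]|[nz Tv]]; split=> // _ [f [g [Sf Tg ->]]]; rewrite /ev mevalM.
    by have := Sv f Sf; rewrite /ev => ->; rewrite mul0r.
  by have := Tv g Tg; rewrite /ev => ->; rewrite mulr0.
move=> [nz STv].
case: (classic (forall f, S f -> ev f v = 0)) => [Sv|notSv]; first by left.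
right; have [f not_imp] := not_all_ex_not _ _ notSv.
have [Sf nfv] := imply_to_and _ _ not_imp.
split=> // g Tg; have /eqP := STv _ (ex_intro _ f (ex_intro _ g (And3 Sf Tg erefl))).
by rewrite /ev mevalM mulf_eq0 => /orP [/eqP fv|/eqP //]; case: nfv.
Qed.

Lemma zclosed_bigcup (I : eqType) (s : seq I) (Y : I -> pset K n) :
  (forall j, zclosed (Y j)) -> zclosed (fun v => exists2 j, j \in s & Y j v).
Proof.
move=> clY; elim: s => [|j s IH].
  by apply: zclosed_ext zclosed_empty => v; split=> // [[]].
apply: zclosed_ext (zclosed_union (clY j) IH) => v; split.
  case=> [Yv|[i si Yv]]; first by exists j; rewrite ?mem_head.
  by exists i; rewrite // inE si orbT.
by case=> i; rewrite inE => /orP [/eqP->|si] Yv; [left|right; exists i].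
Qed.

Lemma irreducible_cover (I : finType) (X : pset K n) (Y : I -> pset K n) :
  irreducible X -> (forall j, zclosed (Y j)) ->
  psubset X (fun v => exists j, Y j v) -> exists j, psubset X (Y j).
Proof.
move=> [[v0 Xv0] irrX] clY covX.
suff: forall s : seq I, (forall v, X v -> exists2 j, j \in s & Y j v) ->
    exists j, psubset X (Y j).
  by apply=> v Xv; case: (covX v Xv) => j Yv; exists j; rewrite ?mem_enum.
elim=> [|j s IH] covXs; first by have [] := covXs v0 Xv0.
have covXjs : forall v, X v -> Y j v \/ exists2 i, i \in s & Y i v.
  move=> v Xv; case: (covXs v Xv) => i; rewrite inE.
  by case/orP=> [/eqP->|si] Yv; [left | right; exists i].
have [XYj|XYs] := irrX _ _ (clY j) (zclosed_bigcup s clY) covXjs.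
  by exists j.
exact: IH.
Qed.

End ClosedSets.

Section Limits.
Variables (K : fieldType) (n : nat).
Hypothesis natf_inj : injective (fun i : nat => i%:R : K).

Lemma poly_eq0_off0 (P : {poly K}) : (forall mu, mu != 0 -> P.[mu] = 0) -> P = 0.
Proof.
move=> P0; apply: (@roots_geq_poly_eq0 _ P [seq i.+1%:R | i <- iota 0 (size P)]).
- by apply/allP => _ /mapP [i _ ->]; apply/rootP/P0/eqP => /(@natf_inj i.+1 0).
- by rewrite map_inj_uniq ?iota_uniq // => i j /natf_inj [].
- by rewrite size_map size_iota.
Qed.

Lemma ev_homogZ (f : hpoly K n) d c (v : hpoint K n) :
  f \is d.-homog -> ev f (fun i => c * v i) = c ^+ d * ev f v.
Proof.
move=> /dhomogP hd; rewrite /ev !mevalE big_distrr /=.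
apply: eq_big_seq => m /hd md; rewrite mulrCA; congr (_ * _).
under eq_bigr do rewrite exprMn.
by rewrite big_split /= prodrXr -mdegE md.
Qed.

(* f evaluated along the orbit mu |-> (mu^(b_i) v_i)_i, as a polynomial in mu *)
Definition orbit_poly (f : hpoly K n) (v : hpoint K n) (b : 'I_n.+1 -> nat) :
    {poly K} :=
  \sum_(m <- msupp f) f@_m *: \prod_i ((v i)%:P * 'X^(b i)) ^+ m i.

Lemma horner_orbit_poly f v b mu :
  (orbit_poly f v b).[mu] = ev f (fun i => v i * mu ^+ b i).
Proof.
rewrite /ev mevalE horner_sum; apply: eq_bigr => m _.
rewrite hornerZ horner_prod; congr (_ * _); apply: eq_bigr => i _.
by rewrite horner_exp hornerM hornerC hornerXn.
Qed.

Definition weighted_limit (b : 'I_n.+1 -> nat) (v : hpoint K n) : hpoint K n :=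
  fun i => v i * 0 ^+ b i.

Lemma zclosed_invariant_limit (a : 'I_n.+1 -> int) (a0 : int)
    (b : 'I_n.+1 -> nat) (X : pset K n) :
  (forall i, a i = a0 + (b i)%:Z) -> zclosed X -> cstar_invariant a X ->
  forall v, X v -> nonzero (weighted_limit b v) -> X (weighted_limit b v).
Proof.
move=> a_shift [S [hS eS]] invX v Xv nz; apply/eS; split=> // f Sf.
have /is_homogP [d hd] := hS f Sf.
rewrite /weighted_limit -horner_orbit_poly (poly_eq0_off0 (P := orbit_poly f v b)).
  by rewrite horner0.
move=> mu mu0; rewrite horner_orbit_poly.
have act_eq : cstar_act a mu v =1 (fun i => mu ^ a0 * (v i * mu ^+ b i)).
  by move=> i; rewrite /cstar_act a_shift expfzDr // -mulrA [_ * v i]mulrC.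
have [_ /(_ f Sf)] := (eS _).1 (invX mu mu0 v Xv).
rewrite /ev (meval_eq f act_eq) -/(ev f _) (ev_homogZ _ _ hd) => /eqP.
by rewrite mulf_eq0 expf_eq0 expfz_eq0 (negbTE mu0) !andbF => /eqP.
Qed.

End Limits.

Section FirstBlock.
Variables (K : fieldType) (n k : nat).

(* (x_0 : ... : x_k) equals (u_0 : ... : u_k); for u_0 = ... = u_k = 0 this
   is the locus x_0 = ... = x_k = 0. *)
Definition block_parallel (u : hpoint K n) : pset K n := fun x =>
  [/\ nonzero x,
      forall i i' : 'I_n.+1, (i <= k)%N -> (i' <= k)%N -> x i * u i' = x i' * u i
    & forall i : 'I_n.+1, (i <= k)%N -> u i = 0 -> x i = 0].

Lemma zclosed_block_parallel u : zclosed (block_parallel u).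
Proof.
exists (fun f => (exists i i' : 'I_n.+1,
                  [/\ (i <= k)%N, (i' <= k)%N & f = u i' *: 'X_i - u i *: 'X_i'])
          \/ exists i : 'I_n.+1, [/\ (i <= k)%N, u i = 0 & f = 'X_i]).
have homX1 (i : 'I_n.+1) : ('X_i : hpoly K n) \is 1.-homog.
  by rewrite dhomogX; apply/eqP; exact: mdeg1.
split=> [f [[i [i' [_ _ ->]]]|[i [_ _ ->]]]|v].
- by apply/is_homogP; exists 1%N; rewrite rpredB // dhomogZ.
- by apply/is_homogP; exists 1%N.
rewrite /ev; split=> [[nz cross zero]|[nz vanish]].
  split=> // _ [[i [i' [ik i'k ->]]]|[i [ik ui ->]]].
    by rewrite mevalB !mevalZ !mevalXU mulrC cross // mulrC subrr.
  by rewrite mevalXU zero.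
split=> // [i i' ik i'k|i ik ui].
  apply/eqP; rewrite -subr_eq0 mulrC [v i' * _]mulrC -(mevalXU v) -mevalZ.
  rewrite -(mevalXU v i') -mevalZ -mevalB vanish //.
  by left; exists i, i'.
by rewrite -(mevalXU v) vanish //; right; exists i.
Qed.

Lemma span_first_block_scale u x : span_first k x -> block_parallel u x ->
  exists2 c : K, c != 0 & forall i : 'I_n.+1, (i <= k)%N -> x i = c * u i.
Proof.
move=> [[i0 xi0] x_out] [_ cross zero].
have i0k : (i0 <= k)%N.
  by rewrite leqNgt; apply: contraNN xi0 => /x_out ->.
have ui0 : u i0 != 0 by apply: contraNN xi0 => /eqP /(zero i0 i0k) ->.
exists (x i0 / u i0); first by rewrite mulf_neq0 // invr_eq0.
by move=> i ik; rewrite mulrAC -cross // mulfK.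
Qed.

Lemma block_parallel_proportional u v v' :
  span_first k v -> span_first k v' ->
  block_parallel u v -> block_parallel u v' -> proportional v v'.
Proof.
move=> sv sv' /(span_first_block_scale sv) [c c0 vE].
move=> /(span_first_block_scale sv') [c' c'0 v'E].
exists (c' / c); split=> [|i]; first by rewrite mulf_neq0 // invr_eq0.
have [ik|ki] := leqP i k; last by rewrite sv.2 // sv'.2 // mulr0.
by rewrite vE // v'E // mulrA divfK.
Qed.

Lemma span_first_fixed (a : 'I_n.+1 -> int) a0 (v : hpoint K n) :
  (forall i : 'I_n.+1, (i <= k)%N -> a i = a0) -> span_first k v ->
  cstar_fixed a v.
Proof.
move=> a_block [_ v_out] l l0; exists (l ^ a0).
split=> [|i]; first exact: expfz_neq0.
rewrite /cstar_act; have [ik|ki] := leqP i k; first by rewrite a_block.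
by rewrite v_out // !mulr0.
Qed.

End FirstBlock.

Section Source.
Variables (K : fieldType) (n k : nat).
Hypothesis natf_inj : injective (fun i : nat => i%:R : K).

Lemma first_block_points_proportional (a : 'I_n.+1 -> int) (a0 : int)
    (X : pset K n) :
  (forall i : 'I_n.+1, (i <= k)%N -> a i = a0) ->
  (forall i : 'I_n.+1, (k < i)%N -> a0 < a i) ->
  zclosed X -> irreducible X -> cstar_invariant a X -> finite_fixed_locus a X ->
  forall v v', X v -> X v' -> span_first k v -> span_first k v' ->
  proportional v v'.
Proof.
move=> a_block a_out clX irrX invX [N [u fixX]].
pose b i := `|a i - a0|%N.
have a_shift i : a i = a0 + (b i)%:Z.
  rewrite /b gez0_abs ?subr_ge0 ?[a0 + _]addrC ?subrK //.
  by have [/a_block->|/a_out/ltW] := leqP i k.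
have limitE (x : hpoint K n) i :
    weighted_limit b x i = if (i <= k)%N then x i else 0.
  rewrite /weighted_limit /b; have [ik|ki] := leqP i k.
    by rewrite a_block // subrr mulr1.
  by rewrite expr0n absz_eq0 subr_eq0 gt_eqF ?a_out // mulr0.
pose Y (o : option 'I_N) := block_parallel k (oapp u (fun=> 0) o).
have covX v : X v -> exists o, Y o v.
  move=> Xv; pose v' := weighted_limit b v.
  have v'_block (i : 'I_n.+1) : (i <= k)%N -> v' i = v i.
    by move=> ik; rewrite /v' limitE ik.
  have v'_out (i : 'I_n.+1) : (k < i)%N -> v' i = 0.
    by move=> ki; rewrite /v' limitE leqNgt ki.
  have nzv := zclosed_nonzero clX Xv.
  case: (classic (nonzero v')) => [nzv'|zv'].
    have sv' : span_first k v' by split.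
    have Xv' := zclosed_invariant_limit natf_inj a_shift clX invX Xv nzv'.
    have [j [c [_ v'E]]] := fixX v' Xv' (span_first_fixed a_block sv').
    exists (Some j); rewrite /Y /=; split=> // [i i' ik i'k|i ik uji].
      by rewrite -(v'_block i ik) -(v'_block i' i'k) !v'E mulrAC.
    by rewrite -(v'_block i ik) v'E uji mulr0.
  exists None; rewrite /Y /=; split=> // [i i' _ _|i ik _]; first by rewrite !mulr0.
  rewrite -(v'_block i ik); apply/eqP/(contra_notT _ zv') => nzi.
  by exists i.
have [o XY] := irreducible_cover irrX (fun o => zclosed_block_parallel _ _) covX.
move=> v v' Xv Xv' sv sv'.
exact: block_parallel_proportional sv sv' (XY v Xv) (XY v' Xv').
Qed.

End Source.

Theorem proposition4 (R : realType) (n : nat) (a : 'I_n.+1 -> int) (k : nat)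
  (X : pset (CC R) n) :
  (* a_0 <= a_1 <= ... <= a_n, not all equal *)
  (forall i j : 'I_n.+1, (i <= j)%N -> a i <= a j) ->
  (exists i j : 'I_n.+1, a i != a j) ->
  (* a_0 = ... = a_k < a_{k+1} *)
  (forall i : 'I_n.+1, (i <= k)%N -> a i = a ord0) ->
  (forall i : 'I_n.+1, nat_of_ord i = k.+1 -> a ord0 < a i) ->
  (* X smooth connected projective variety, C^*-invariant, finite fixed locus *)
  proj_variety X -> smooth X -> connected X ->
  cstar_invariant a X ->
  finite_fixed_locus a X ->
  (* #(X cap F_1) <= dim F_1 + 1 = k + 1 *)
  forall (m : nat) (w : 'I_m -> hpoint (CC R) n),
    (forall j, X (w j) /\ @span_first (CC R) n k (w j)) ->
    (forall j j', j != j' -> ~ proportional (w j) (w j')) ->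
    (m <= k.+1)%N.
Proof.
move=> a_sorted _ a_block a_next [clX irrX] _ _ invX finX m w Xw w_distinct.
have a_out (i : 'I_n.+1) : (k < i)%N -> a ord0 < a i.
  move=> ki; have kn : (k.+1 < n.+1)%N := leq_ltn_trans ki (ltn_ord i).
  exact: lt_le_trans (a_next (Ordinal kn) erefl) (a_sorted (Ordinal kn) i ki).
have natf_inj : injective (fun i : nat => i%:R : CC R).
  by move=> i j /eqP; rewrite eqr_nat => /eqP.
have w_proportional j j' : proportional (w j) (w j').
  have [[Xj sj] [Xj' sj']] := (Xw j, Xw j').
  exact: (first_block_points_proportional natf_inj a_block a_out clX irrX invX
    finX Xj Xj' sj sj').
case: m w Xw w_distinct w_proportional => [|[|m]] // w _ w_distinct w_proportional.
by case: (w_distinct ord0 (lift ord0 ord0) isT (w_proportional _ _)).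
Qed.
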